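(* Assume the network $\Sigma$ is well-posed and let $\mathcal{A}\subset X$ be nonempty and closed. (i) $\Sigma$ is ISS with respect to $\mathcal{A}$ if and only if there is $M\in\mathbb{N}$ such that $\Sigma^M$ is ISS with respect to $\mathcal{A}$ and $f$ is $\mathcal{K}$-bounded with respect to $\mathcal{A}$. (ii) $\Sigma$ is eISS with respect to $\mathcal{A}$ if and only if there is $M\in\mathbb{N}$ such that $\Sigma^M$ is eISS with respect to $\mathcal{A}$ and $f$ is $\mathcal{K}$-bounded with respect to $\mathcal{A}$ with a linear function $\kappa_1$ (i.e. $\kappa_1(s)=cs$ for some $c>0$).
   Context: Setting: for each $i\in\mathbb{N}$ fix positive integers $n_i,p_i$, norms $|\cdot|$ on $\mathbb{R}^{n_i},\mathbb{R}^{p_i}$, and a finite set $I_i\subset\mathbb{N}\setminus\{i\}$ such that each set $\{j: i\in I_j\}$ is finite; let $f_i:\mathbb{R}^{n_i}\times\prod_{j\in I_i}\mathbb{R}^{n_j}\times\mathbb{R}^{p_i}\to\mathbb{R}^{n_i}$ be continuous. $X$ (resp. $U$) is the space of sequences $(x_i)$ with $x_i\in\mathbb{R}^{n_i}$ (resp. $(u_i)$ with $u_i\in\mathbb{R}^{p_i}$) with finite norm $|x|_\infty=\sup_i|x_i|$ (resp. $|u|_\infty=\sup_i|u_i|$); $X_E=\prod_i\mathbb{R}^{n_i}$; $f:X_E\times U\to X_E$, $f(x,u)_i=f_i(x_i,(x_j)_{j\in I_i},u_i)$. The network $\Sigma$ is $x(k+1)=f(x(k),u(k))$, $k\in\mathbb{N}_0$.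 $\mathcal{U}$ is the set of sequences $u:\mathbb{N}_0\to U$ with $\|u\|_\infty:=\sup_{k\ge0}|u(k)|_\infty<\infty$; $x(k,\xi,u)$ is the solution with $x(0)=\xi$. $\Sigma$ is well-posed if $f(X\times U)\subset X$. For $\mathcal{A}\subset X$ nonempty closed, $|x|_{\mathcal{A}}:=\inf_{y\in\mathcal{A}}|x-y|_\infty$. $f$ is $\mathcal{K}$-bounded w.r.t. $\mathcal{A}$ if there are $\kappa_1,\kappa_2\in\mathcal{K}$ with $|f(\xi,\mu)|_{\mathcal{A}}\le\kappa_1(|\xi|_{\mathcal{A}})+\kappa_2(|\mu|_\infty)$ for all $\xi\in X,\mu\in U$. $\Sigma$ is ISS w.r.t. $\mathcal{A}$ if there exist $\beta\in\mathcal{KL}$, $\gamma\in\mathcal{K}$ with $|x(k,\xi,u)|_{\mathcal{A}}\le\max\{\beta(|\xi|_{\mathcal{A}},k),\gamma(\|u\|_\infty)\}$ for all $\xi\in X$, $u\in\mathcal{U}$, $k\in\mathbb{N}_0$; it is eISS if additionally $\beta$ can be taken as $\beta(r,k)=C\rho^k r$ with $C\ge1$, $\rho\in[0,1)$. For $M\in\mathbb{N}$, $\Sigma^M$ denotes the $M$-iterate system $x^+=f^M(x,(u_0,\dots,u_{M-1}))$, where $f^1=f$ and $f^{k+1}(x,(u_0,\dots,u_k))=f(f^k(x,(u_0,\dots,u_{k-1})),u_k)$; $\Sigma^M$ is ISS w.r.t. $\mathcal{A}$ if there exist $\beta\in\mathcal{KL}$, $\gamma\in\mathcal{K}$ with $|x(Mk,\xi,u)|_{\mathcal{A}}\le\max\{\beta(|\xi|_{\mathcal{A}},k),\gamma(\|u\|_\infty)\}$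 for all $\xi\in X$, $u\in\mathcal{U}$, $k\in\mathbb{N}_0$, and eISS if $\beta$ can be taken as $C\rho^k r$ with $C\ge1$, $\rho\in[0,1)$. $\mathcal{K}$: continuous strictly increasing $\gamma:[0,\infty)\to[0,\infty)$ with $\gamma(0)=0$; $\mathcal{L}$: continuous strictly decreasing functions tending to $0$; $\mathcal{KL}$: continuous $\beta$ with $\beta(\cdot,t)\in\mathcal{K}$ and $\beta(r,\cdot)\in\mathcal{L}$ for $r>0$. *)

From HB Require Import structures.
From mathcomp Require Import all_boot all_order all_algebra.
From mathcomp Require Import all_classical all_reals all_analysis.
Set Implicit Arguments. Unset Strict Implicit. Unset Printing Implicit Defensive.
Import Order.TTheory GRing.Theory Num.Theory.
Import numFieldNormedType.Exports.
Local Open Scope classical_set_scope.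
Local Open Scope ring_scope.

Section Network.
Variable R : realType.

Definition is_norm (m : nat) (N : 'rV[R]_m -> R) : Prop :=
  [/\ (forall x, 0 <= N x),
      (forall x, N x = 0 -> x = 0),
      (forall (a : R) x, N (a *: x) = `|a| * N x) &
      (forall x y, N (x + y) <= N x + N y)].

Definition class_K (g : R -> R) : Prop :=
  [/\ g 0 = 0,
      {within [set x : R | 0 <= x], continuous g} &
      (forall a b, 0 <= a -> a < b -> g a < g b)].

Definition class_L (g : R -> R) : Prop :=
  [/\ {within [set x : R | 0 <= x], continuous g},
      (forall a b, 0 <= a -> a < b -> g b < g a) &
      g x @[x --> +oo] --> 0].

Definition class_KL (b : R -> R -> R) : Prop :=
  [/\ {within [set z : R * R | 0 <= z.1 /\ 0 <= z.2],
         continuous (fun z : R * R => b z.1 z.2)},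
      (forall t, 0 <= t -> class_K (fun r => b r t)) &
      (forall r, 0 < r -> class_L (fun t => b r t))].

Variables (n p : nat -> nat).
Variables (nx : forall i, 'rV[R]_(n i) -> R) (nu : forall i, 'rV[R]_(p i) -> R).

Definition stateE := forall i : nat, 'rV[R]_(n i).
Definition inputE := forall i : nat, 'rV[R]_(p i).

Definition in_X (x : stateE) : Prop := exists C : R, forall i, @nx i (x i) <= C.
Definition in_U (u : inputE) : Prop := exists C : R, forall i, @nu i (u i) <= C.

Definition normX (x : stateE) : R := sup (range (fun i => @nx i (x i))).
Definition normU (u : inputE) : R := sup (range (fun i => @nu i (u i))).

Definition subX (x y : stateE) : stateE := fun i => x i - y i.

Definition distA (A : set stateE) (x : stateE) : R :=
  inf [set normX (subX x y) | y in A].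

Definition closed_in_X (A : set stateE) : Prop :=
  forall x, in_X x ->
    (forall e : R, 0 < e -> exists2 y, A y & normX (subX x y) < e) -> A x.

Definition in_calU (u : nat -> inputE) : Prop :=
  exists C : R, forall k i, @nu i (u k i) <= C.
Definition normcalU (u : nat -> inputE) : R := sup (range (fun k => normU (u k))).

Variable I : nat -> seq nat.
Variable fi : forall i, stateE -> 'rV[R]_(p i) -> 'rV[R]_(n i).

Definition fi_local : Prop :=
  forall i (x x' : stateE) u, x' i = x i -> (forall j, j \in I i -> x' j = x j) ->
    @fi i x' u = @fi i x u.

Definition fi_continuous : Prop :=
  forall i (x : stateE) (u : 'rV[R]_(p i)) (e : R), 0 < e ->
    exists2 d : R, 0 < d & forall (x' : stateE) (u' : 'rV[R]_(p i)),
      @nx i (x' i - x i) < d -> (forall j, j \in I i -> @nx j (x' j - x j) < d) ->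
      @nu i (u' - u) < d -> @nx i (@fi i x' u' - @fi i x u) < e.

Definition fnet (x : stateE) (u : inputE) : stateE := fun i => @fi i x (u i).

Definition well_posed : Prop :=
  forall x u, in_X x -> in_U u -> in_X (fnet x u).

Fixpoint traj (xi : stateE) (u : nat -> inputE) (k : nat) : stateE :=
  match k with
  | 0%N => xi
  | k'.+1 => fnet (traj xi u k') (u k')
  end.

Definition ISS (A : set stateE) : Prop :=
  exists (beta : R -> R -> R) (gamma : R -> R),
    [/\ class_KL beta, class_K gamma &
      forall xi u k, in_X xi -> in_calU u ->
        distA A (traj xi u k) <= Num.max (beta (distA A xi) k%:R) (gamma (normcalU u))].

Definition eISS (A : set stateE) : Prop :=
  exists (C rho : R) (gamma : R -> R),
    [/\ 1 <= C, 0 <= rho < 1, class_K gamma &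
      forall xi u k, in_X xi -> in_calU u ->
        distA A (traj xi u k) <= Num.max (C * rho ^+ k * distA A xi) (gamma (normcalU u))].

(** ISS / eISS of the M-iterate system Sigma^M: x(M k, xi, u) estimates *)
Definition ISS_iter (M : nat) (A : set stateE) : Prop :=
  exists (beta : R -> R -> R) (gamma : R -> R),
    [/\ class_KL beta, class_K gamma &
      forall xi u k, in_X xi -> in_calU u ->
        distA A (traj xi u (M * k)) <= Num.max (beta (distA A xi) k%:R) (gamma (normcalU u))].

Definition eISS_iter (M : nat) (A : set stateE) : Prop :=
  exists (C rho : R) (gamma : R -> R),
    [/\ 1 <= C, 0 <= rho < 1, class_K gamma &
      forall xi u k, in_X xi -> in_calU u ->
        distA A (traj xi u (M * k)) <= Num.max (C * rho ^+ k * distA A xi) (gamma (normcalU u))].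

Definition K_bounded (A : set stateE) : Prop :=
  exists k1 k2 : R -> R, [/\ class_K k1, class_K k2 &
    forall xi mu, in_X xi -> in_U mu ->
      distA A (fnet xi mu) <= k1 (distA A xi) + k2 (normU mu)].

Definition K_bounded_lin (A : set stateE) : Prop :=
  exists (c : R) (k2 : R -> R), [/\ 0 < c, class_K k2 &
    forall xi mu, in_X xi -> in_U mu ->
      distA A (fnet xi mu) <= c * distA A xi + k2 (normU mu)].

End Network.

(* For the forward implications take M = 1: the ISS (eISS)
   estimate for one step under a constant input already is the
   K-boundedness of f, with kappa_1 = beta(., 1) (resp. kappa_1(s) = (C rho + 1) s).
   Conversely, K-boundedness gives |x(k+1)|_A <= kappa_1(|x(k)|_A) + kappa_2(||u||),
   so along a block of M steps the distance grows at most through the M-th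
   iterate of y |-> y + kappa_1(y).  Starting each block from the Sigma^M
   estimate at time M * (k / M) yields
     |x(k)|_A <= max (S (beta(r, k / M))) (S (gamma(s) + kappa_2(s)))
   for a K-function S.  In the ISS case S o beta(r, k / M) is dominated by a
   KL function of (r, k); in the eISS case S is linear and
   rho^(k / M) <= q^k / q^M as soon as rho <= q^M, with q < 1. *)

From HB Require Import structures.
From mathcomp Require Import all_boot all_order all_algebra.
From mathcomp Require Import all_classical all_reals all_analysis.
From mathcomp Require Import ring lra.
Import Order.TTheory GRing.Theory Num.Theory.
Import numFieldNormedType.Exports.
Set Implicit Arguments. Unset Strict Implicit. Unset Printing Implicit Defensive.
Local Open Scope classical_set_scope.
Local Open Scope ring_scope.

Lemma continuous_pair {T U V : topologicalType} (f : T -> U) (g : T -> V) :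
  continuous f -> continuous g -> continuous (fun z => (f z, g z)).
Proof. by move=> fc gc z; apply: cvg_pair; [exact: fc | exact: gc]. Qed.

Lemma continuous_retract {T U : topologicalType} (D : set T) (f : T -> U) (r : T -> T) :
  {within D, continuous f} -> continuous r -> (forall x, D (r x)) ->
  continuous (f \o r).
Proof.
move=> /subspace_continuousP fc rc rD x; apply: cvg_trans (fc _ (rD x)).
move=> W; rewrite /within /= nbhs_simpl => /(rc x); rewrite nbhs_simpl /=.
by apply: filterS => y; apply.
Qed.

Lemma natr_divn_ge (R : realFieldType) (k M : nat) : (0 < M)%N ->
  k%:R / M%:R - 1 <= (k %/ M)%N%:R :> R.
Proof.
move=> M_gt0; rewrite lerBlDr ler_pdivrMr ?ltr0n // natr1 -natrM ler_nat.
by rewrite {1}(divn_eq k M) mulSn addnC leq_add2r ltnW // ltn_pmod.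
Qed.

Section ComparisonFunctions.
Variable R : realType.
Implicit Types (g h : R -> R) (b : R -> R -> R).

(* Composing with the clamp [posr] turns functions continuous on [0, +oo)
   into globally continuous ones, which is how all continuity conditions of
   comparison functions are checked below. *)
Definition posr (x : R) := Num.max x 0.

Lemma posr_ge0 x : 0 <= posr x.
Proof. by rewrite le_max lexx orbT. Qed.

Lemma posrE x : 0 <= x -> posr x = x.
Proof. exact: max_l. Qed.

Lemma ler_posr : {homo posr : x y / x <= y}.
Proof. by move=> x y xy; rewrite ge_max !le_max xy lexx !orbT. Qed.

Lemma continuous_posr : continuous posr.
Proof.
by move=> x; apply: (@continuous_max _ _ id (cst 0)); [exact: cvg_id | exact: cvg_cst].
Qed.

Lemma posr_affine_cvgy (c d : R) : 0 < c -> posr (t / c - d) @[t --> +oo] --> +oo.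
Proof.
move=> c0; apply/cvgryPge => B.
apply: filterS (nbhs_pinfty_ge (num_real ((B + d) * c))) => t Bt.
by rewrite le_max lerBrDr ler_pdivlMr // Bt.
Qed.

Lemma classK_ge0 g x : class_K g -> 0 <= x -> 0 <= g x.
Proof.
case=> g0 _ gs; rewrite le_eqVlt => /orP[/eqP <-|]; first by rewrite g0.
by move=> /(gs _ _ (lexx 0)); rewrite g0 => /ltW.
Qed.

Lemma classK_le g x y : class_K g -> 0 <= x -> x <= y -> g x <= g y.
Proof.
case=> _ _ gs x0; rewrite le_eqVlt => /orP[/eqP -> //|xy].
exact/ltW/gs.
Qed.

Lemma continuous_classK_posr g : class_K g -> continuous (g \o posr).
Proof.
case=> _ gc _; exact: continuous_retract gc continuous_posr posr_ge0.
Qed.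

Lemma continuous_within_nonneg g h : (forall x, 0 <= x -> g x = h x) -> continuous h ->
  {within [set x : R | 0 <= x], continuous g}.
Proof.
move=> gh hc; apply: (@subspace_eq_continuous _ _ _ (from_subspace _ h)).
  by move=> x; rewrite inE => x0; rewrite /from_subspace gh.
exact: continuous_subspaceT.
Qed.

Lemma classK_comp g h : class_K g -> class_K h -> class_K (g \o h).
Proof.
move=> gK hK; have [g0 _ gs] := gK; have [h0 _ hs] := hK; split.
- by rewrite /= h0 g0.
- apply: (@continuous_within_nonneg (g \o h) ((g \o posr) \o (h \o posr))).
    by move=> x x0 /=; rewrite !posrE // classK_ge0.
  move=> x; apply: continuous_comp; first exact: continuous_classK_posr.
  exact: continuous_classK_posr.
- by move=> x y x0 xy /=; apply: gs (hs _ _ x0 xy); apply: classK_ge0.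
Qed.

Lemma classKD g h : class_K g -> class_K h -> class_K (g \+ h).
Proof.
move=> gK hK; have [g0 _ gs] := gK; have [h0 _ hs] := hK; split.
- by rewrite /= g0 h0 addr0.
- apply: (@continuous_within_nonneg (g \+ h) ((g \o posr) \+ (h \o posr))).
    by move=> x x0 /=; rewrite posrE.
  move=> x; apply: continuousD; exact: continuous_classK_posr.
- by move=> x y x0 xy /=; apply: ltrD; [exact: gs | exact: hs].
Qed.

Lemma classK_scale (c : R) : 0 < c -> class_K ( *%R c).
Proof.
move=> c0; split; first exact: mulr0.
- by apply: continuous_subspaceT => x; apply: cvgMl_tmp; exact: cvg_id.
- by move=> x y _ xy; rewrite ltr_pM2l.
Qed.

Lemma classK_posr : class_K posr.
Proof.
split; first exact: posrE.
- exact: continuous_subspaceT continuous_posr.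
- by move=> x y x0 xy; rewrite !posrE // (le_trans x0 (ltW xy)).
Qed.

Lemma classK_id : class_K (@id R).
Proof. by split => //; apply: continuous_subspaceT => x; exact: cvg_id. Qed.

End ComparisonFunctions.

Arguments posr {R}.

Section KLFunctions.
Variable R : realType.
Variable b : R -> R -> R.
Hypothesis bKL : class_KL b.

Lemma classKL_K t : 0 <= t -> class_K (b^~ t).
Proof. by case: bKL => _ + _; apply. Qed.

Lemma classKL_0 t : 0 <= t -> b 0 t = 0.
Proof. by case/classKL_K. Qed.

Lemma classKL_ge0 r t : 0 <= r -> 0 <= t -> 0 <= b r t.
Proof. by move=> r0 t0; exact: classK_ge0 (classKL_K t0) r0. Qed.

Lemma classKL_gt0 r t : 0 < r -> 0 <= t -> 0 < b r t.
Proof.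
move=> r0 t0; have [b0 _ bs] := classKL_K t0.
by rewrite -b0; exact: bs (lexx 0) r0.
Qed.

Lemma classKL_le r r' t : 0 <= r -> r <= r' -> 0 <= t -> b r t <= b r' t.
Proof. by move=> r0 rr' t0; exact: classK_le (classKL_K t0) r0 rr'. Qed.

Lemma classKL_lt_decr r t t' : 0 < r -> 0 <= t -> t < t' -> b r t' < b r t.
Proof. by case: bKL => _ _ /[apply] -[_ + _]; apply. Qed.

Lemma classKL_le_decr r t t' : 0 <= r -> 0 <= t -> t <= t' -> b r t' <= b r t.
Proof.
rewrite le_eqVlt => /orP[/eqP <- t0 tt'|r0 t0].
  by rewrite !classKL_0 // (le_trans t0 tt').
by rewrite le_eqVlt => /orP[/eqP -> //|tt']; exact/ltW/classKL_lt_decr.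
Qed.

Lemma continuous_classKL_posr : continuous (fun z : R * R => b (posr z.1) (posr z.2)).
Proof.
case: bKL => bc _ _.
apply: (@continuous_retract _ _ _ (fun z : R * R => b z.1 z.2)
  (fun z => (posr z.1, posr z.2)) bc).
  apply: continuous_pair => z.
    apply: cvg_comp (@cvg_fst _ _ (nbhs z.1) (nbhs z.2) _) _.
    exact: continuous_posr.
  apply: cvg_comp (@cvg_snd _ _ (nbhs z.1) (nbhs z.2) _) _.
  exact: continuous_posr.
by move=> z; split; exact: posr_ge0.
Qed.

End KLFunctions.

Section BlockKL.
Variable R : realType.
Variables (b : R -> R -> R) (S : R -> R) (M : nat).
Hypotheses (bKL : class_KL b) (SK : class_K S) (Sc : continuous S) (M_gt0 : (0 < M)%N).

(* The first summand is only nonincreasing in [t] (it is constant on [0, M]);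
   the second one makes it strictly decreasing. *)
Definition block_KL (r t : R) : R :=
  S (b (posr r) (posr (t / M%:R - 1))) + S (b (posr r) (posr 0)) * b (posr 1) (posr t).

Let B (z : R * R) := b (posr z.1) (posr z.2).

Let continuous_B : continuous B := continuous_classKL_posr bKL.

Let continuous_SB (f : R * R -> R * R) :
  continuous f -> continuous (fun z => S (B (f z))).
Proof.
move=> fc z.
exact: (continuous_comp (fc z) (continuous_comp (@continuous_B _) (@Sc _))).
Qed.

Lemma continuous_block_KL : continuous (fun z : R * R => block_KL z.1 z.2).
Proof.
have fst_c : continuous (@fst R R) by case=> x y; exact: cvg_fst.
have snd_c : continuous (@snd R R) by case=> x y; exact: cvg_snd.
have c1 : continuous (fun z : R * R => S (B (z.1, z.2 / M%:R - 1))).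
  apply: continuous_SB; apply: continuous_pair fst_c _ => z.
  by apply: cvgB (cvg_cst _); apply: cvgMr_tmp; exact: snd_c.
have c2 : continuous (fun z : R * R => S (B (z.1, 0))).
  by apply: continuous_SB; exact: continuous_pair fst_c (@cst_continuous _ R 0).
have c3 : continuous (fun z : R * R => B (1, z.2)).
  move=> z; apply: continuous_comp (@continuous_B _).
  exact: continuous_pair (@cst_continuous _ R 1) snd_c z.
by move=> z; exact: continuousD (c1 z) (continuousM (c2 z) (c3 z)).
Qed.

Lemma block_KL_ge r k : 0 <= r -> S (b r (k %/ M)%N%:R) <= block_KL r k%:R.
Proof.
move=> r0; rewrite /block_KL posrE //.
have Sb_ge0 x y : 0 <= x -> 0 <= y -> 0 <= S (b x y).
  by move=> x0 y0; exact/(classK_ge0 SK)/(classKL_ge0 bKL).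
apply: le_trans (_ : S (b r (posr (k%:R / M%:R - 1))) <= _); last first.
  by rewrite lerDl mulr_ge0 ?Sb_ge0 ?(classKL_ge0 bKL) ?posr_ge0.
apply: (classK_le SK); first exact: (classKL_ge0 bKL).
apply: (classKL_le_decr bKL) => //; first exact: posr_ge0.
by rewrite ge_max ler0n andbT; exact: natr_divn_ge.
Qed.

Lemma block_KL_cvg0 r : 0 < r -> block_KL r t @[t --> +oo] --> 0.
Proof.
move=> r0; have [S0 _ _] := SK.
have [_ _ /(_ _ r0)[_ _ br_lim]] := bKL.
have [_ _ /(_ _ ltr01)[_ _ b1_lim]] := bKL.
rewrite -[0]addr0 -{2}(mulr0 (S (b (posr r) (posr 0)))) -{1}S0.
apply: cvgD; last apply: cvgMl_tmp.
  apply: (cvg_comp (fun t => b (posr r) (posr (t / M%:R - 1))) S _ (@Sc 0)).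
  rewrite (posrE (ltW r0)); apply: cvg_comp _ _ _ br_lim.
  by apply: posr_affine_cvgy; rewrite ltr0n.
rewrite posrE ?ler01 //; apply: (cvg_comp posr (b 1) _ b1_lim).
apply: cvg_trans (posr_affine_cvgy 0 ltr01); apply: near_eq_cvg.
by near=> t; rewrite divr1 subr0.
Unshelve. all: by end_near.
Qed.

Lemma block_KL_classKL : class_KL block_KL.
Proof.
have [S0 _ Ss] := SK.
have posr0 : posr 0 = 0 :> R by rewrite posrE.
have posr1 : posr 1 = 1 :> R by rewrite posrE.
have along (f : R -> R * R) :
    continuous f -> continuous (fun x => block_KL (f x).1 (f x).2).
  by move=> fc x; exact: continuous_comp (fc x) (@continuous_block_KL _).
split.
- exact: continuous_subspaceT continuous_block_KL.
- move=> t t0; split.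
  + by rewrite /block_KL posr0 !(classKL_0 bKL) ?posr_ge0 // S0 mul0r addr0.
  + apply: continuous_subspaceT; apply: (along (fun r => (r, t))).
    exact: continuous_pair (fun r => cvg_id) (@cst_continuous _ _ t).
  + move=> x y x0 xy; rewrite /block_KL (posrE x0) (posrE (le_trans x0 (ltW xy))).
    apply: ltr_leD.
      apply: Ss; first exact: (classKL_ge0 bKL) (posr_ge0 _).
      by have [_ _] := classKL_K bKL (posr_ge0 (t / M%:R - 1)); apply.
    apply: ler_wpM2r; first exact: (classKL_ge0 bKL) (posr_ge0 _) (posr_ge0 _).
    apply: (classK_le SK); first exact: (classKL_ge0 bKL) x0 (posr_ge0 _).
    exact: (classKL_le bKL) x0 (ltW xy) (posr_ge0 _).
- move=> r r0; split.
  + apply: continuous_subspaceT; apply: (along (fun t => (r, t))).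
    exact: continuous_pair (@cst_continuous _ _ r) (fun t => cvg_id).
  + move=> x y x0 xy; rewrite /block_KL posr0 posr1 (posrE (ltW r0)).
    apply: ler_ltD.
      apply: (classK_le SK); first exact: (classKL_ge0 bKL) (ltW r0) (posr_ge0 _).
      apply: (classKL_le_decr bKL (ltW r0)); first exact: posr_ge0.
      by apply: ler_posr; rewrite lerD2r ler_pM2r ?invr_gt0 ?ltr0n // ltW.
    rewrite ltr_pM2l; last first.
      by have := Ss _ _ (lexx 0) (classKL_gt0 bKL r0 (lexx 0)); rewrite S0.
    rewrite (posrE x0) (posrE (le_trans x0 (ltW xy))).
    exact: (classKL_lt_decr bKL).
  + exact: block_KL_cvg0.
Qed.

End BlockKL.

Section BlockIteration.
Variable R : realDomainType.

(* The factor 2 absorbs the additive constant of the one-step bound: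
   max u v + c <= max (2 u) (2 (v + c)). *)
Definition block_growth (k1 : R -> R) (M : nat) (x : R) : R :=
  iter M (fun y => y + k1 y) (2 * x).

Variables (k1 : R -> R) (c : R) (a : nat -> R).
Hypotheses (k1_ge0 : forall x, 0 <= x -> 0 <= k1 x)
  (k1_le : forall x y, 0 <= x -> x <= y -> k1 x <= k1 y)
  (c_ge0 : 0 <= c) (a_ge0 : forall i, 0 <= a i)
  (a_succ : forall i, a i.+1 <= k1 (a i) + c).

Local Notation F := (fun y => y + k1 y).

Lemma iter_growth_ge j z : 0 <= z -> z <= iter j F z.
Proof.
move=> z0; elim: j => [//|j IH] /=.
by rewrite (le_trans IH) // lerDl k1_ge0 // (le_trans z0).
Qed.

Lemma iter_growth_le j z z' : 0 <= z -> z <= z' -> iter j F z <= iter j F z'.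
Proof.
move=> z0 zz'; elim: j => [//|j IH] /=.
by rewrite lerD // k1_le // (le_trans z0) // iter_growth_ge.
Qed.

Lemma iter_growth_leS j j' z : 0 <= z -> (j <= j')%N -> iter j F z <= iter j' F z.
Proof.
move=> z0 /subnK <-; elim: (j' - j)%N => [//|d IH].
by rewrite addSn /= (le_trans IH) // lerDl k1_ge0 // (le_trans z0) // iter_growth_ge.
Qed.

Lemma seq_le_iter_growth m j : a (m + j) <= iter j F (a m + c).
Proof.
elim: j => [|j IH]; first by rewrite addn0 lerDl.
rewrite addnS /= (le_trans (a_succ _)) // addrC lerD //.
  by rewrite (le_trans _ (iter_growth_ge _ _)) ?lerDr // addr_ge0.
exact: k1_le.
Qed.

Lemma block_bound M (u : nat -> R) (v : R) : (0 < M)%N ->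
  (forall l, 0 <= u l) -> 0 <= v -> (forall l, a (M * l) <= Num.max (u l) v) ->
  forall k, a k <= Num.max (block_growth k1 M (u (k %/ M)%N)) (block_growth k1 M (v + c)).
Proof.
move=> M_gt0 u_ge0 v_ge0 a_block k; set l := (k %/ M)%N.
have -> : k = (M * l + k %% M)%N by rewrite mulnC -divn_eq.
have am_ge0 : 0 <= a (M * l) + c by rewrite addr_ge0.
apply: le_trans (seq_le_iter_growth _ _) _.
apply: le_trans (iter_growth_leS am_ge0 (ltnW (ltn_pmod k M_gt0))) _.
have := a_block l; rewrite le_max => /orP a_le.
rewrite /block_growth le_max; apply/orP.
have := u_ge0 l; have [uv|vu] := leP (u l) (v + c) => ul_ge0; [right | left];
  by apply: iter_growth_le am_ge0 _; case: a_le; lra.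
Qed.

End BlockIteration.

Lemma block_growth_linear (R : realDomainType) (c : R) M x :
  block_growth ( *%R c) M x = 2 * (1 + c) ^+ M * x.
Proof.
rewrite /block_growth mulrAC; elim: M => [|M IH] /=; first by rewrite expr0 mulr1.
by rewrite IH exprS; ring.
Qed.

Section GrowthClassK.
Variable R : realType.

Lemma continuous_iter (f : R -> R) j : continuous f -> continuous (iter j f).
Proof.
move=> fc; elim: j => [|j IH] x /=; first exact: cvg_id.
exact: continuous_comp (@IH x) (@fc _).
Qed.

Lemma classK_iter (f : R -> R) j : class_K f -> class_K (iter j f).
Proof.
by move=> fK; elim: j => [|j IH]; [exact: classK_id | exact: classK_comp fK IH].
Qed.

Variables (k1 : R -> R) (M : nat).
Hypothesis k1K : class_K k1.

Lemma block_growth_classK : class_K (block_growth (k1 \o posr) M).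
Proof.
apply: classK_comp (classK_scale _); last by rewrite ltr0n.
apply/classK_iter/classKD; first exact: classK_id.
exact: classK_comp k1K (@classK_posr R).
Qed.

Lemma continuous_block_growth : continuous (block_growth (k1 \o posr) M).
Proof.
have Fc : continuous (fun y => y + (k1 \o posr) y).
  by move=> y; apply: cvgD cvg_id _; exact: continuous_classK_posr.
have mc : continuous (fun y : R => 2 * y).
  by move=> y; apply: cvgMl_tmp; exact: cvg_id.
by move=> x; exact: continuous_comp (@mc x) (@continuous_iter _ M Fc _).
Qed.

End GrowthClassK.

Lemma bernoulli_ineq (R : realDomainType) (x : R) m :
  -1 <= x -> 1 + m%:R * x <= (1 + x) ^+ m.
Proof.
move=> x_ge; elim: m => [|m IH]; first by rewrite mul0r addr0 expr0.
have x1_ge0 : 0 <= 1 + x by lra.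
rewrite exprS -natr1; apply: le_trans (ler_wpM2l x1_ge0 IH).
have : 0 <= m%:R * x ^+ 2 by rewrite mulr_ge0 ?sqr_ge0.
by rewrite expr2; nra.
Qed.

Lemma geometric_root_ge (R : realFieldType) (rho : R) M : 0 <= rho < 1 ->
  exists2 q : R, 0 < q < 1 & rho <= q ^+ M.
Proof.
case/andP=> rho_ge0 rho_lt1; pose e := (1 - rho) / M.+2%:R.
have eE : e * (M%:R + 2) = 1 - rho by rewrite -[_ + 2]natrD addn2 mulfVK.
have e_gt0 : 0 < e by rewrite divr_gt0 ?subr_gt0.
have M_ge0 : 0 <= M%:R :> R by [].
exists (1 - e); first by apply/andP; split; nra.
by apply: le_trans (bernoulli_ineq M _); nra.
Qed.

Lemma expr_divn_le (R : realFieldType) (rho q : R) M k : (0 < M)%N ->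
  0 <= rho -> 0 < q <= 1 -> rho <= q ^+ M -> rho ^+ (k %/ M)%N <= q ^+ k / q ^+ M.
Proof.
move=> M_gt0 rho_ge0 /andP[q_gt0 q_le1] rho_le.
have q_ge0 := ltW q_gt0.
rewrite ler_pdivlMr ?exprn_gt0 //.
apply: le_trans (_ : q ^+ (M * (k %/ M) + M) <= _).
  rewrite exprD; apply: ler_wpM2r; first exact: exprn_ge0.
  by rewrite exprM lerXn2r // nnegrE // exprn_ge0.
rewrite ler_wiXn2l //.
by rewrite {1}(divn_eq k M) mulnC leq_add2l ltnW ?ltn_pmod.
Qed.

Lemma sup_range_ge0 (R : realType) (T : Type) (t0 : T) (g : T -> R) :
  (forall t, 0 <= g t) -> 0 <= sup (range g).
Proof.
move=> g_ge0; have [ub|nub] := pselect (has_ubound (range g)).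
  by apply: le_trans (g_ge0 t0) _; apply: ub_le_sup => //; exists t0.
by rewrite sup_out // => -[].
Qed.

Section Network.
Variable R : realType.
Variables (n p : nat -> nat).
Variables (nx : forall i, 'rV[R]_(n i) -> R) (nu : forall i, 'rV[R]_(p i) -> R).
Variable fi : forall i, stateE R n -> 'rV[R]_(p i) -> 'rV[R]_(n i).
Variable A : set (stateE R n).
Hypotheses (nx_norm : forall i, is_norm (@nx i)) (nu_norm : forall i, is_norm (@nu i)).
Hypothesis A_neq0 : A !=set0.
Hypothesis wp : well_posed nx nu fi.

Lemma normU_ge0 mu : 0 <= normU nu mu.
Proof. by apply: (sup_range_ge0 0%N) => i; case: (nu_norm i). Qed.

Lemma normcalU_ge0 u : 0 <= normcalU nu u.
Proof. by apply: (sup_range_ge0 0%N) => k; exact: normU_ge0. Qed.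

Lemma distA_ge0 x : 0 <= distA nx A x.
Proof.
apply: lb_le_inf; first by case: A_neq0 => y Ay; exists (normX nx (subX x y)), y.
by move=> _ [y _ <-]; apply: (sup_range_ge0 0%N) => i; case: (nx_norm i).
Qed.

Lemma in_calU_in_U u k : in_calU nu u -> in_U nu (u k).
Proof. by case=> C HC; exists C. Qed.

Lemma normU_le_normcalU u k : in_calU nu u -> normU nu (u k) <= normcalU nu u.
Proof.
case=> C HC; apply: ub_le_sup; last by exists k.
exists C => _ [j _ <-]; apply: ge_sup; first by exists (@nu 0%N (u j 0%N)), 0%N.
by move=> _ [i _ <-].
Qed.

Lemma in_calU_cst mu : in_U nu mu -> in_calU nu (fun=> mu).
Proof. by case=> C HC; exists C. Qed.

Lemma normcalU_cst mu : normcalU nu (fun=> mu) = normU nu mu.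
Proof.
rewrite /normcalU (_ : range _ = [set normU nu mu]) ?sup1 //.
by apply/seteqP; split => [_ [k _ <-] //|_ ->]; exists 0%N.
Qed.

Lemma traj_in_X xi u k : in_X nx xi -> in_calU nu u -> in_X nx (traj fi xi u k).
Proof.
by move=> xiX uU; elim: k => [//|k IH] /=; apply: wp => //; exact: in_calU_in_U.
Qed.

Lemma distA_traj_succ_le (k1 k2 : R -> R) xi u i : class_K k2 ->
  (forall xi mu, in_X nx xi -> in_U nu mu ->
     distA nx A (fnet fi xi mu) <= k1 (distA nx A xi) + k2 (normU nu mu)) ->
  in_X nx xi -> in_calU nu u ->
  distA nx A (traj fi xi u i.+1) <=
    k1 (distA nx A (traj fi xi u i)) + k2 (normcalU nu u).
Proof.
move=> k2K f_bound xiX uU; apply: le_trans (f_bound _ _ _ (in_calU_in_U _ uU)) _.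
  exact: traj_in_X.
by rewrite lerD2l (classK_le k2K) ?normU_ge0 ?normU_le_normcalU.
Qed.

Lemma ISS_iter1 : ISS nx nu fi A -> ISS_iter nx nu fi 1 A.
Proof.
case=> b [g [bKL gK bound]]; exists b, g; split => // xi u k.
by rewrite mul1n; exact: bound.
Qed.

Lemma eISS_iter1 : eISS nx nu fi A -> eISS_iter nx nu fi 1 A.
Proof.
case=> C [rho [g [C_ge1 rho01 gK bound]]]; exists C, rho, g; split => // xi u k.
by rewrite mul1n; exact: bound.
Qed.

Lemma ISS_K_bounded : ISS nx nu fi A -> K_bounded nx nu fi A.
Proof.
case=> b [g [bKL gK bound]]; exists (b^~ 1), g; split => //.
  exact: classKL_K.
move=> xi mu xiX muU; have := bound xi _ 1%N xiX (in_calU_cst muU).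
rewrite normcalU_cst => /le_trans; apply.
by rewrite ge_max lerDl lerDr classK_ge0 ?normU_ge0 // (classKL_ge0 bKL) ?distA_ge0.
Qed.

Lemma eISS_K_bounded_lin : eISS nx nu fi A -> K_bounded_lin nx nu fi A.
Proof.
case=> C [rho [g [C_ge1 /andP[rho_ge0 _] gK bound]]].
exists (C * rho + 1), g; split => //.
  by rewrite ltr_wpDl // mulr_ge0 // (le_trans ler01).
move=> xi mu xiX muU; have := bound xi _ 1%N xiX (in_calU_cst muU).
rewrite normcalU_cst expr1 => /le_trans; apply.
have d_ge0 := distA_ge0 xi; have g_ge0 := classK_ge0 gK (normU_ge0 mu).
have Cd_ge0 : 0 <= C * rho * distA nx A xi by rewrite !mulr_ge0 // (le_trans ler01).
by rewrite ge_max; apply/andP; split; lra.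
Qed.

Lemma ISS_of_iter M : (0 < M)%N ->
  ISS_iter nx nu fi M A -> K_bounded nx nu fi A -> ISS nx nu fi A.
Proof.
move=> M_gt0 [b [g [bKL gK bound]]] [k1 [k2 [k1K k2K f_bound]]].
pose S := block_growth (k1 \o posr) M.
have SK : class_K S := block_growth_classK M k1K.
exists (block_KL b S M), (S \o (g \+ k2)); split.
- exact: block_KL_classKL bKL SK (continuous_block_growth (M:=M) k1K) M_gt0.
- exact: classK_comp SK (classKD gK k2K).
move=> xi u k xiX uU; set s := normcalU nu u.
have s_ge0 : 0 <= s := normcalU_ge0 u.
have k1_ge0 x : 0 <= x -> 0 <= (k1 \o posr) x.
  by move=> _; exact/(classK_ge0 k1K)/posr_ge0.
have k1_le x y : 0 <= x -> x <= y -> (k1 \o posr) x <= (k1 \o posr) y.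
  by move=> x0 xy /=; rewrite !posrE ?(le_trans x0 xy) //; exact: classK_le.
have a_succ i : distA nx A (traj fi xi u i.+1) <=
    (k1 \o posr) (distA nx A (traj fi xi u i)) + k2 s.
  by rewrite /= posrE ?distA_ge0 //; exact: distA_traj_succ_le.
have := block_bound k1_ge0 k1_le (classK_ge0 k2K s_ge0) (fun i => distA_ge0 _) a_succ
  M_gt0 (fun l => classKL_ge0 bKL (distA_ge0 xi) (ler0n _ l)) (classK_ge0 gK s_ge0)
  (fun l => bound xi u l xiX uU) k.
move=> /le_trans; apply; apply: le_max2 => //.
exact: (block_KL_ge bKL SK M_gt0 _ (distA_ge0 xi)).
Qed.

Lemma eISS_of_iter M : (0 < M)%N ->
  eISS_iter nx nu fi M A -> K_bounded_lin nx nu fi A -> eISS nx nu fi A.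
Proof.
move=> M_gt0 [C [rho [g [C_ge1 rho01 gK bound]]]] [c [k2 [c_gt0 k2K f_bound]]].
have [q /andP[q_gt0 q_lt1] rho_le] := geometric_root_ge M rho01.
have [rho_ge0 _] := andP rho01.
pose D := 2 * (1 + c) ^+ M.
have D_ge1 : 1 <= D.
  by rewrite -[1]mul1r ler_pM ?ler01 ?exprn_ege1 //; lra.
have qM_gt0 : 0 < q ^+ M := exprn_gt0 M q_gt0.
exists (D * C / q ^+ M), q, ( *%R D \o (g \+ k2)); split.
- rewrite ler_pdivlMr // mul1r (le_trans (exprn_ile1 _ (ltW q_gt0) (ltW q_lt1))) //.
  by rewrite -[1]mul1r ler_pM.
- by rewrite (ltW q_gt0) q_lt1.
- by apply: classK_comp (classKD gK k2K); apply: classK_scale; lra.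
move=> xi u k xiX uU; set r := distA nx A xi; set s := normcalU nu u.
have s_ge0 : 0 <= s := normcalU_ge0 u.
have r_ge0 : 0 <= r := distA_ge0 xi.
have a_succ i : distA nx A (traj fi xi u i.+1) <=
    c * distA nx A (traj fi xi u i) + k2 s.
  exact: distA_traj_succ_le.
have := block_bound (k1 := *%R c) (fun x x0 => mulr_ge0 (ltW c_gt0) x0)
  (fun x y _ xy => ler_wpM2l (ltW c_gt0) xy) (classK_ge0 k2K s_ge0)
  (fun i => distA_ge0 _) a_succ M_gt0
  (fun l => mulr_ge0 (mulr_ge0 (le_trans ler01 C_ge1) (exprn_ge0 l rho_ge0)) r_ge0)
  (classK_ge0 gK s_ge0) (fun l => bound xi u l xiX uU) k.
rewrite !block_growth_linear -/D => /le_trans; apply; apply: le_max2 => //=.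
have D_ge0 : 0 <= D by lra.
have rho_q : rho ^+ (k %/ M) <= q ^+ k / q ^+ M.
  by apply: expr_divn_le => //; rewrite q_gt0 ltW.
rewrite (_ : _ * q ^+ k * r = D * (C * (q ^+ k / q ^+ M) * r)); last by ring.
by rewrite ler_wpM2l // ler_wpM2r // ler_wpM2l // (le_trans ler01).
Qed.

End Network.

Theorem proposition1 (R : realType) (n p : nat -> nat)
  (nx : forall i, 'rV[R]_(n i) -> R) (nu : forall i, 'rV[R]_(p i) -> R)
  (I : nat -> seq nat)
  (fi : forall i, stateE R n -> 'rV[R]_(p i) -> 'rV[R]_(n i))
  (A : set (stateE R n)) :
  (forall i, (0 < n i)%N) -> (forall i, (0 < p i)%N) ->
  (forall i, is_norm (nx i)) -> (forall i, is_norm (nu i)) ->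
  (forall i, i \notin I i) ->
  (forall i, exists N : nat, forall j, i \in I j -> (j < N)%N) ->
  fi_local I fi -> fi_continuous nx nu I fi ->
  well_posed nx nu fi ->
  A !=set0 -> (forall y, A y -> in_X nx y) -> closed_in_X nx A ->
  (ISS nx nu fi A <->
     exists M : nat, (0 < M)%N /\ ISS_iter nx nu fi M A /\ K_bounded nx nu fi A) /\
  (eISS nx nu fi A <->
     exists M : nat, (0 < M)%N /\ eISS_iter nx nu fi M A /\ K_bounded_lin nx nu fi A).
Proof.
(* Neither the structure of the interconnection nor the closedness of A
   enters the argument. *)
move=> _ _ nx_norm nu_norm _ _ _ _ wp A_neq0 _ _; split; split.
- move=> ISS_A; exists 1%N; split; first by [].
  by split; [exact: ISS_iter1 | exact: ISS_K_bounded nx_norm nu_norm A_neq0 ISS_A].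
- case=> M [M_gt0 [ISS_M Kb]].
  exact: (ISS_of_iter nx_norm nu_norm A_neq0 wp M_gt0 ISS_M Kb).
- move=> eISS_A; exists 1%N; split; first by [].
  by split; [exact: eISS_iter1 | exact: eISS_K_bounded_lin nx_norm nu_norm A_neq0 eISS_A].
- case=> M [M_gt0 [eISS_M Kb]].
  exact: (eISS_of_iter nx_norm nu_norm A_neq0 wp M_gt0 eISS_M Kb).
Qed.
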